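(* Let $Z(n)=\sum_{k=0}^{n-1}\frac{1+(-1)^{k}k!(n-k-1)!}{n}$ for positive integers $n$. For $0<\lvert x\rvert<1$, \[ \sum_{n=0}^{\infty}Z(n+1)\frac{x^{n}}{n!}=e^{x}-\frac{1}{x^{2}}\ln\left(1-x^{2}\right). \] *)

From Stdlib Require Import Reals List Factorial.
From Coquelicot Require Import Coquelicot.
Open Scope R_scope.

Definition Zfun (n : nat) : R :=
  fold_right Rplus 0
    (map (fun k => (1 + (-1) ^ k * INR (fact k * fact (n - k - 1))%nat) / INR n)
         (seq 0 n)).

From Stdlib Require Import Reals List Factorial Lra Lia.
From Coquelicot Require Import Coquelicot.
Open Scope R_scope.

(* Since k! (m+1-k)! + (k+1)! (m-k)! = (m+2) k! (m-k)!, the alternating sum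
   sum_{k<=m} (-1)^k k! (m-k)! telescopes to (m+1)! (1 + (-1)^m) / (m+2), so
   Z(m+1) = 1 + m! (1 + (-1)^m) / (m+2).  The series thus splits into
   sum x^m/m! = e^x and sum_j x^(2j)/(j+1) = -ln(1-x^2)/x^2, the latter being
   the geometric series integrated term by term: -ln(1-y) = int_0^y dt/(1-t). *)

Lemma fold_right_Rplus_map_seq (f : nat -> R) (n : nat) :
  fold_right Rplus 0 (map f (seq 0 (S n))) = sum_f_R0 f n.
Proof.
  revert f; induction n as [|n IH]; intro f.
  - simpl; ring.
  - change (seq 0 (S (S n))) with (0%nat :: seq 1 (S n)).
    rewrite decomp_sum by lia; simpl pred.
    rewrite <- IH, <- seq_shift; cbn [map fold_right].
    rewrite map_map; reflexivity.
Qed.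

Lemma sum_f_R0_alternating_telescope (b : nat -> R) (n : nat) :
  sum_f_R0 (fun k => (-1) ^ k * (b k + b (S k))) n = b O + (-1) ^ n * b (S n).
Proof. induction n as [|n IH]; simpl; [|rewrite IH]; ring. Qed.

Lemma fact_mul_shift_add (m k : nat) : (k <= m)%nat ->
  INR (fact k * fact (m + 1 - k)) + INR (fact (S k) * fact (m - k))
  = INR (m + 2) * INR (fact k * fact (m - k)).
Proof.
  intro hkm; destruct (Nat.le_exists_sub k m hkm) as [j [-> _]].
  replace (j + k + 1 - k)%nat with (S j) by lia.
  replace (j + k - k)%nat with j by lia.
  rewrite <- !mult_INR, <- plus_INR, !fact_simpl; f_equal; ring.
Qed.

Lemma alternating_fact_sum (m : nat) :
  INR (m + 2) * sum_f_R0 (fun k => (-1) ^ k * INR (fact k * fact (m - k))) m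
  = INR (fact (S m)) * (1 + (-1) ^ m).
Proof.
  rewrite scal_sum.
  rewrite (sum_eq _ (fun k => (-1) ^ k *
             (INR (fact k * fact (m + 1 - k)) + INR (fact (S k) * fact (m + 1 - S k))))).
  - rewrite sum_f_R0_alternating_telescope.
    replace (m + 1 - 0)%nat with (S m) by lia.
    replace (m + 1 - S m)%nat with O by lia.
    rewrite !mult_INR; simpl (fact 0); simpl (INR 1); ring.
  - intros k hk; replace (m + 1 - S k)%nat with (m - k)%nat by lia.
    rewrite fact_mul_shift_add by exact hk; ring.
Qed.

Lemma Zfun_succ (m : nat) :
  Zfun (S m) = 1 + INR (fact m) * (1 + (-1) ^ m) / INR (m + 2).
Proof.
  assert (hm1 : INR (S m) <> 0) by (apply not_0_INR; lia).
  assert (hm2 : INR (m + 2) <> 0) by (apply not_0_INR; lia).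
  set (s := sum_f_R0 (fun k => (-1) ^ k * INR (fact k * fact (m - k))) m).
  assert (hs : s = INR (fact (S m)) * (1 + (-1) ^ m) / INR (m + 2)).
  { rewrite <- alternating_fact_sum; unfold s; field; exact hm2. }
  unfold Zfun; rewrite fold_right_Rplus_map_seq.
  rewrite (sum_eq _ (fun k => / INR (S m) + (-1) ^ k * INR (fact k * fact (m - k)) / INR (S m))).
  - rewrite sum_plus, sum_cte.
    rewrite (sum_eq _ (fun k => (-1) ^ k * INR (fact k * fact (m - k)) * / INR (S m))) by reflexivity.
    rewrite <- scal_sum; fold s; rewrite hs, fact_simpl, mult_INR.
    field; split; assumption.
  - intros k _; replace (S m - k - 1)%nat with (m - k)%nat by lia.
    field; exact hm1.
Qed.

Lemma CV_radius_one : CV_radius (fun _ : nat => 1) = 1.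
Proof.
  rewrite (CV_radius_finite_DAlembert _ 1).
  - rewrite Rinv_1; reflexivity.
  - intros _; apply R1_neq_R0.
  - apply Rlt_0_1.
  - apply is_lim_seq_ext with (fun _ => 1); [|apply is_lim_seq_const].
    intros _; rewrite Rdiv_1_r, Rabs_R1; reflexivity.
Qed.

Lemma PSeries_one (y : R) : Rabs y < 1 -> PSeries (fun _ : nat => 1) y = / (1 - y).
Proof.
  intro hy; apply is_pseries_unique, is_pseries_R.
  apply (is_series_ext (fun n => y ^ n)); [intro n; symmetry; apply Rmult_1_l|].
  exact (is_series_geom y hy).
Qed.

Lemma is_pseries_ln_one_minus (y : R) : Rabs y < 1 ->
  is_pseries (PS_Int (fun _ : nat => 1)) y (- ln (1 - y)).
Proof.
  intro hy.
  assert (inside : forall t, Rmin 0 y <= t <= Rmax 0 y -> Rabs t < 1).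
  { intros t ht; unfold Rmin, Rmax in ht.
    destruct (Rle_dec 0 y); apply Rabs_def1; apply Rabs_def2 in hy; lra. }
  replace (- ln (1 - y)) with (RInt (PSeries (fun _ : nat => 1)) 0 y).
  { apply is_pseries_RInt; rewrite CV_radius_one; exact hy. }
  apply is_RInt_unique.
  replace (- ln (1 - y)) with (minus (- ln (1 - y)) (- ln (1 - 0)))
    by (rewrite Rminus_0_r, ln_1; unfold minus, plus, opp; simpl; ring).
  apply (is_RInt_derive (fun t => - ln (1 - t))).
  - intros t ht; specialize (inside t ht).
    rewrite PSeries_one by exact inside.
    assert (0 < 1 - t) by (apply Rabs_def2 in inside; lra).
    auto_derive; [lra | field; lra].
  - intros t ht; apply continuity_pt_filterlim, PSeries_continuity.
    rewrite CV_radius_one; exact (inside t ht).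
Qed.

Lemma is_pseries_ln_one_minus_div (y : R) : y <> 0 -> Rabs y < 1 ->
  is_pseries (fun n => / INR (S n)) y (- ln (1 - y) / y).
Proof.
  intros hy0 hy.
  assert (H := is_pseries_decr_1 _ y (/ y) _ (Rinv_l y hy0) (is_pseries_ln_one_minus y hy)).
  replace (- ln (1 - y) / y) with (scal (/ y) (plus (- ln (1 - y)) (opp (PS_Int (fun _ : nat => 1) 0)))).
  - refine (is_pseries_ext _ _ _ _ _ H).
    intro n; unfold PS_decr_1, PS_Int; apply Rdiv_1_l.
  - unfold scal, plus, opp; simpl; unfold mult; simpl; field; exact hy0.
Qed.

Lemma is_pseries_zero (x : R) : is_pseries (fun _ : nat => 0) x 0.
Proof.
  assert (inside : Rbar_lt (Rabs x) (CV_radius (fun _ : nat => 0)))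
    by (rewrite CV_radius_const_0; exact I).
  assert (H := PSeries_correct _ _ (CV_radius_inside _ _ inside)).
  rewrite PSeries_const_0 in H; exact H.
Qed.

Lemma is_pseries_ln_one_minus_sq (x : R) : x <> 0 -> Rabs x < 1 ->
  is_pseries (fun n => (1 + (-1) ^ n) / INR (n + 2)) x (- ln (1 - x ^ 2) / x ^ 2).
Proof.
  intros hx0 hx.
  assert (hx2 : Rabs (x ^ 2) < 1) by (rewrite <- RPow_abs; pose proof (Rabs_pos x); nra).
  rewrite <- (Rplus_0_r (_ / _)), <- (Rmult_0_r x).
  apply is_pseries_odd_even.
  - apply (is_pseries_ext (fun n => / INR (S n))).
    + intro n; rewrite pow_1_even, plus_INR, mult_INR, S_INR; simpl; field.
      pose proof (pos_INR n); lra.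
    + apply is_pseries_ln_one_minus_div; [apply pow_nonzero|]; assumption.
  - apply (is_pseries_ext (fun _ => 0)); [|apply is_pseries_zero].
    intro n; rewrite Nat.add_1_r, pow_1_odd, Rplus_opp_r; symmetry; apply Rdiv_0_l.
Qed.

Theorem mainTheorem14 (x : R) (hx0 : 0 < Rabs x) (hx1 : Rabs x < 1) :
  is_series (fun n : nat => Zfun (n + 1)%nat * x ^ n / INR (fact n))
            (exp x - / (x ^ 2) * ln (1 - x ^ 2)).
Proof.
  assert (hx : x <> 0) by (intro h; rewrite h, Rabs_R0 in hx0; lra).
  assert (H := is_pseries_plus _ _ _ _ _ (is_exp_Reals x) (is_pseries_ln_one_minus_sq x hx hx1)).
  apply is_pseries_R in H.
  replace (exp x - / x ^ 2 * ln (1 - x ^ 2)) with (plus (exp x) (- ln (1 - x ^ 2) / x ^ 2))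
    by (unfold plus; simpl; field; exact hx).
  refine (is_series_ext _ _ _ _ H).
  intro n; unfold PS_plus, plus; simpl.
  rewrite Nat.add_1_r, Zfun_succ.
  assert (INR (fact n) <> 0) by apply INR_fact_neq_0.
  assert (INR (n + 2) <> 0) by (apply not_0_INR; lia).
  field; split; assumption.
Qed.
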